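(* Under the setup in the context, assume $V_M^TV_A=I$. Let $\psi^{(k)}_j$ be defined by $\psi^{(0)}_j=0$ and $\psi_j^{(k)} = \psi_j^{(k-1)} + \frac{\sigma_{A,j}^2}{\sigma^2_{M,j}+\alpha^2}\big(1-\frac{\sigma_{A,j}^2}{\sigma^2_{M,j}+\alpha^2}\big)^{k-1}$ for $k\ge1$. Define $\phi^{(0)}_j=0$ and, for $k\ge1$, $$\phi_{j}^{(k)} = \phi_{j}^{(k-1)} + \left(\sigma_{M,j}^2+\alpha^2\right)^{-1}\Big[\left(\sigma_{M,j}^2+\alpha^2\right)\big(\psi_j^{(k)}-\psi_j^{(k-1)}\big) + \Delta^{(k)}_j -\alpha^2\phi^{(k-1)}_{j}\Big],$$ where $$\Delta^{(k)}_j = \frac{\alpha^2\sigma_{A,j}^2}{\sigma_{M,j}^2+\alpha^2}\sum_{i=0}^{k-2}\left(1-\frac{\sigma_{A,j}^2}{\sigma_{M,j}^2+\alpha^2}\right)^i\phi_{j}^{(k-2-i)}$$ (empty sum $=0$). Then for every $k\ge0$, $$x^{(k)}_{IR} = \sum_{j=1}^n \phi_j^{(k)}\frac{u^T_{A,j}b}{\sigma_{A,j}}v_{M,j}.$$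
   Context: Let $m\ge n$ and $A\in\mathbb{R}^{m\times n}$ with singular value decomposition $A=U_A\Sigma_AV_A^T$, where $U_A\in\mathbb{R}^{m\times m}$, $V_A\in\mathbb{R}^{n\times n}$ are orthogonal with columns $u_{A,j}$, $v_{A,j}$, and $\Sigma_A\in\mathbb{R}^{m\times n}$ is diagonal with diagonal entries $\sigma_{A,1}\ge\dots\ge\sigma_{A,n}>0$. Let $b\in\mathbb{R}^m$ and $\alpha>0$. Let $V_M\in\mathbb{R}^{n\times n}$ be orthogonal with columns $v_{M,j}$, let $\sigma_{M,1},\dots,\sigma_{M,n}\ge 0$ be given reals, let $D_M=\mathrm{diag}(d_{M,1},\dots,d_{M,n})$ with $d_{M,j}=(\sigma_{M,j}^2+\alpha^2)^{1/2}$, and let $M=D_MV_M^T$. The iterative refinement iterates for the Tikhonov problem are $x^{(0)}_{IR}=0$ and $x^{(k)}_{IR} = x^{(k-1)}_{IR} + (M^TM)^{-1}A^T(b-Ax^{(k-1)}_{IR}) - \alpha^2 (M^TM)^{-1}x^{(k-1)}_{IR}$ for $k\ge1$. (The paper intends the bracketed quantity to be computed in a high precision and the preconditioner in a low precision; the statement here is the exact-arithmetic identity.) *)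

From HB Require Import structures.
From mathcomp Require Import all_boot all_order all_algebra.
Set Implicit Arguments. Unset Strict Implicit. Unset Printing Implicit Defensive.
Import Order.TTheory GRing.Theory Num.Theory.
Local Open Scope ring_scope.

Definition rdiag_mx (R : nzRingType) (m n : nat) (s : 'I_n -> R) : 'M[R]_(m, n) :=
  \matrix_(i < m, j < n) (if (i : nat) == (j : nat) then s j else 0).

Definition DM (R : rcfType) (n : nat) (sM : 'I_n -> R) (alpha : R) : 'M[R]_n :=
  diag_mx (\row_j Num.sqrt (sM j ^+ 2 + alpha ^+ 2)).

Definition Mmat (R : rcfType) (n : nat) (VM : 'M[R]_n) (sM : 'I_n -> R) (alpha : R)
  : 'M[R]_n := DM sM alpha *m VM^T.

Fixpoint xIR (R : rcfType) (m n : nat) (A : 'M[R]_(m, n)) (b : 'cV[R]_m)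
  (M : 'M[R]_n) (alpha : R) (k : nat) : 'cV[R]_n :=
  match k with
  | 0 => 0
  | k'.+1 =>
      let x := xIR A b M alpha k' in
      let P := invmx (M^T *m M) in
      x + P *m (A^T *m (b - A *m x)) - alpha ^+ 2 *: (P *m x)
  end.

(* psi^(k) with ratio r = sigma_{A,j}^2 / (sigma_{M,j}^2 + alpha^2):
   psi^(0) = 0,  psi^(k) = psi^(k-1) + r (1 - r)^(k-1). *)
Fixpoint psi (R : nzRingType) (r : R) (k : nat) : R :=
  match k with
  | 0 => 0
  | k'.+1 => psi r k' + r * (1 - r) ^+ k'
  end.

(* phis d2 r a2 k = [:: phi^(0); ...; phi^(k)], where d2 = sigma_{M,j}^2 + alpha^2,
   r = sigma_{A,j}^2 / d2, a2 = alpha^2.  For k = k'+1: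
   phi^(k) = phi^(k-1) + d2^-1 [ d2 (psi^(k) - psi^(k-1)) + Delta^(k) - a2 phi^(k-1) ],
   Delta^(k) = (a2 * sigma_{A,j}^2 / d2) * \sum_{i=0}^{k-2} (1-r)^i phi^(k-2-i). *)
Fixpoint phis (R : fieldType) (d2 r a2 : R) (k : nat) : seq R :=
  match k with
  | 0 => [:: 0]
  | k'.+1 =>
      let s := phis d2 r a2 k' in
      let prev := fun i => nth 0 s i in
      let Delta := a2 * r * \sum_(i < k') (1 - r) ^+ i * prev (k' - 1 - i)%N in
      rcons s (prev k' + d2^-1 * (d2 * (psi r k'.+1 - psi r k') + Delta - a2 * prev k'))
  end.

Definition phi (R : fieldType) (d2 r a2 : R) (k : nat) : R := nth 0 (phis d2 r a2 k) k.

Definition phij (R : fieldType) (n : nat) (sA sM : 'I_n -> R) (alpha : R) (j : 'I_n) (k : nat) : R :=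
  let d2 := sM j ^+ 2 + alpha ^+ 2 in
  phi d2 (sA j ^+ 2 / d2) (alpha ^+ 2) k.

From HB Require Import structures.
From mathcomp Require Import all_boot all_order all_algebra.
From mathcomp Require Import zify ring.
Set Implicit Arguments. Unset Strict Implicit. Unset Printing Implicit Defensive.
Import Order.TTheory GRing.Theory Num.Theory.
Local Open Scope ring_scope.

(* Since V_M^T V_A = I forces V_M = V_A, the matrices A^T A and
   M^T M = V_M D_M^2 V_M^T are simultaneously diagonalised by V_M, so in the
   coordinates w = V_M^T x each refinement step is the scalar update
   w_j <- w_j + (s (u^T b - s w_j) - alpha^2 w_j) / (sigma_{M,j}^2 + alpha^2)
   with s = sigma_{A,j} and u = u_{A,j}.
   The recursion defining phi, although it carries the memory term Delta^(k),
   satisfies the same one-step recurrence once scaled by u_{A,j}^T b / sigma_{A,j},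
   and both start at 0. *)

Lemma phis_size (R : fieldType) (d2 r a2 : R) k : size (phis d2 r a2 k) = k.+1.
Proof. by elim: k => [|k IH] //=; rewrite size_rcons IH. Qed.

Lemma nth_phis (R : fieldType) (d2 r a2 : R) k i : (i <= k)%N ->
  nth 0 (phis d2 r a2 k) i = phi d2 r a2 i.
Proof.
elim: k => [|k IH]; first by rewrite leqn0 => /eqP ->.
rewrite leq_eqVlt => /orP [/eqP ->|lt_ik] //.
by rewrite /= nth_rcons phis_size lt_ik IH.
Qed.

Lemma phi_rec (R : fieldType) (d2 r a2 : R) k :
  phi d2 r a2 k.+1 = phi d2 r a2 k + d2^-1 * (d2 * (r * (1 - r) ^+ k)
     + a2 * r * \sum_(i < k) (1 - r) ^+ i * phi d2 r a2 (k - 1 - i)%N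
     - a2 * phi d2 r a2 k).
Proof.
rewrite {1}/phi /= nth_rcons phis_size ltnn eqxx nth_phis // [psi _ _ + _]addrC addrK.
congr (_ + _ * (_ + _ * _ - _)); apply: eq_bigr => i _.
by rewrite nth_phis //; lia.
Qed.

(* With S_k the sum inside Delta^(k), the invariant
   (1 - r)^k + (a2/d2) S_k = 1 - phi^(k) removes the memory term. *)
Lemma phiS (R : fieldType) (d2 r a2 : R) k : d2 != 0 ->
  phi d2 r a2 k.+1 = phi d2 r a2 k + r * (1 - phi d2 r a2 k) - a2 / d2 * phi d2 r a2 k.
Proof.
move=> d2_neq0; set p := phi d2 r a2.
pose S j := \sum_(i < j) (1 - r) ^+ i * p (j - 1 - i)%N.
have SS j : S j.+1 = p j + (1 - r) * S j.
  rewrite /S big_ord_recl /= expr0 mul1r subn0 subn1 /=.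
  congr (_ + _); rewrite mulr_sumr; apply: eq_bigr => i _.
  rewrite exprS -mulrA; congr (_ * (_ * p _)); rewrite /bump /=; lia.
have pS j : p j.+1 = p j + r * ((1 - r) ^+ j + a2 / d2 * S j) - a2 / d2 * p j.
  by rewrite /p phi_rec -/p -/(S j); field.
have inv j : (1 - r) ^+ j + a2 / d2 * S j = 1 - p j.
  elim: j => [|j IH]; first by rewrite /S big_ord0 mulr0 addr0 expr0 subr0.
  have E : (1 - r) ^+ j = 1 - p j - a2 / d2 * S j by rewrite -IH; ring.
  by rewrite pS SS exprS E; ring.
by rewrite pS inv.
Qed.

Lemma phi_succ_scaled (R : fieldType) (d2 s a2 c : R) k : d2 != 0 -> s != 0 ->
  phi d2 (s ^+ 2 / d2) a2 k.+1 * (c / s) =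
  phi d2 (s ^+ 2 / d2) a2 k * (c / s)
  + (s * (c - s * (phi d2 (s ^+ 2 / d2) a2 k * (c / s)))
     - a2 * (phi d2 (s ^+ 2 / d2) a2 k * (c / s))) / d2.
Proof.
move=> d2_neq0 s_neq0; rewrite phiS //.
by move: (phi _ _ _ k) => p; field; rewrite d2_neq0 s_neq0.
Qed.

Lemma invmx_right (R : comUnitRingType) n (A B : 'M[R]_n) :
  A *m B = 1%:M -> invmx A = B.
Proof.
move=> AB1; have [uA _] := mulmx1_unit AB1.
by rewrite -[invmx A]mulmx1 -AB1 mulmxA mulVmx // mul1mx.
Qed.

Lemma invmx_orthogonal_diag (R : fieldType) n (V : 'M[R]_n) (d : 'rV[R]_n) :
  V^T *m V = 1%:M -> (forall j, d 0 j != 0) ->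
  invmx (V *m diag_mx d *m V^T) = V *m diag_mx (map_mx GRing.inv d) *m V^T.
Proof.
move=> VtV d_neq0; apply: invmx_right.
rewrite !mulmxA -[_ *m V^T *m V]mulmxA VtV mulmx1 -[V *m _ *m _]mulmxA mulmx_diag.
have -> : diag_mx (\row_j (d 0 j * map_mx GRing.inv d 0 j)) = 1%:M :> 'M[R]_n.
  by apply/matrixP => i j; rewrite !mxE; case: (i == j) => //=; rewrite mulfV.
by rewrite mulmx1 mulmx1C.
Qed.

Lemma Mmat_gram (R : rcfType) n (VM : 'M[R]_n) (sM : 'I_n -> R) (alpha : R) :
  (Mmat VM sM alpha)^T *m Mmat VM sM alpha =
  VM *m diag_mx (\row_j (sM j ^+ 2 + alpha ^+ 2)) *m VM^T.
Proof.
rewrite /Mmat /DM trmx_mul trmxK tr_diag_mx !mulmxA -[VM *m _ *m diag_mx _]mulmxA.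
rewrite mulmx_diag; congr (_ *m diag_mx _ *m _); apply/matrixP => i j.
by rewrite !mxE -expr2 sqr_sqrtr // addr_ge0 ?sqr_ge0.
Qed.

Section RectangularDiagonal.
Variables (R : nzRingType) (m n : nat) (le_nm : (n <= m)%N) (s : 'I_n -> R).

Lemma rdiag_mulmx p (Y : 'M[R]_(n, p)) i j :
  (rdiag_mx m s *m Y) (widen_ord le_nm i) j = s i * Y i j.
Proof.
rewrite mxE (bigD1 i) //= big1 ?addr0; first by rewrite !mxE eqxx.
move=> l /eqP ne_li; rewrite !mxE /=; case: eqP => [eq_il|]; last by rewrite mul0r.
by case: ne_li; apply: val_inj.
Qed.

Lemma tr_rdiag_mulmx p (Z : 'M[R]_(m, p)) i j :
  ((rdiag_mx m s)^T *m Z) i j = s i * Z (widen_ord le_nm i) j.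
Proof.
rewrite mxE (bigD1 (widen_ord le_nm i)) //= big1 ?addr0; first by rewrite !mxE eqxx.
move=> l /eqP ne_li; rewrite !mxE; case: eqP => [eq_li|]; last by rewrite mul0r.
by case: ne_li; apply: val_inj.
Qed.

End RectangularDiagonal.

Section RefinementStep.
Variables (R : fieldType) (m n : nat) (le_nm : (n <= m)%N).
Variables (U : 'M[R]_m) (V : 'M[R]_n) (s d : 'I_n -> R) (A : 'M[R]_(m, n)).
Variables (b : 'cV[R]_m) (a2 : R).
Hypotheses (UtU : U^T *m U = 1%:M) (VtV : V^T *m V = 1%:M).
Hypothesis defA : A = U *m rdiag_mx m s *m V^T.
Hypothesis d_neq0 : forall j, d j != 0.

Let P := invmx (V *m diag_mx (\row_j d j) *m V^T).

Lemma refinement_step_diag (y : 'cV[R]_n) :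
  let x := V *m y in
  x + P *m (A^T *m (b - A *m x)) - a2 *: (P *m x) =
  V *m \col_i (y i 0 + (s i * ((U^T *m b) (widen_ord le_nm i) 0 - s i * y i 0) - a2 * y i 0) / d i).
Proof.
have defP : P = V *m diag_mx (\row_j (d j)^-1) *m V^T.
  rewrite /P invmx_orthogonal_diag //; last by move=> j; rewrite mxE.
  by congr (_ *m diag_mx _ *m _); apply/matrixP => i j; rewrite !mxE.
have VtVy (z : 'cV[R]_n) : V^T *m (V *m z) = z by rewrite mulmxA VtV mul1mx.
rewrite /= defP defA !trmx_mul trmxK -!mulmxA !VtVy mulmxBr (mulmxA U^T) UtU mul1mx.
rewrite scalemxAr -mulmxDr -mulmxBr; congr (V *m _).
apply/matrixP => i j; rewrite ord1 {j} !mul_diag_mx !(tr_rdiag_mulmx, rdiag_mulmx, mxE).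
field; exact: d_neq0.
Qed.

End RefinementStep.

Theorem theorem2 (R : rcfType) (m n : nat) (Hmn : (n <= m)%N)
  (A : 'M[R]_(m, n)) (UA : 'M[R]_m) (VA : 'M[R]_n) (sA : 'I_n -> R)
  (b : 'cV[R]_m) (alpha : R) (VM : 'M[R]_n) (sM : 'I_n -> R) :
  UA^T *m UA = 1%:M ->
  VA^T *m VA = 1%:M ->
  (forall i j : 'I_n, (i <= j)%N -> sA j <= sA i) ->
  (forall j : 'I_n, 0 < sA j) ->
  A = UA *m rdiag_mx m sA *m VA^T ->
  0 < alpha ->
  VM^T *m VM = 1%:M ->
  (forall j : 'I_n, 0 <= sM j) ->
  VM^T *m VA = 1%:M ->
  forall k : nat,
    xIR A b (Mmat VM sM alpha) alpha k =
    \sum_(j < n) (phij sA sM alpha j k *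
                   (((col (widen_ord Hmn j) UA)^T *m b) 0 0 / sA j)) *: col j VM.
Proof.
move=> UtU _ _ sA_gt0 defA alpha_gt0 VtV _ VMtVA k.
have VA_VM : VA = VM by rewrite -[VA]mul1mx -(mulmx1C VtV) -mulmxA VMtVA mulmx1.
rewrite {}VA_VM in defA.
set d2 := fun j => sM j ^+ 2 + alpha ^+ 2.
have d2_neq0 j : d2 j != 0 by rewrite gt_eqF // ltr_wpDl ?sqr_ge0 ?exprn_gt0.
set c := fun j => ((col (widen_ord Hmn j) UA)^T *m b) 0 0.
have -> : \sum_(j < n) (phij sA sM alpha j k * (c j / sA j)) *: col j VM =
          VM *m \col_j (phij sA sM alpha j k * (c j / sA j)).
  apply/matrixP => i j; rewrite ord1 summxE !mxE.
  by apply: eq_bigr => l _; rewrite !mxE mulrC.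
elim: k => [|k IH].
  rewrite /= -[0 in LHS](mulmx0 _ VM); congr (_ *m _).
  by apply/matrixP => i j; rewrite !mxE mul0r.
rewrite /= Mmat_gram IH (refinement_step_diag Hmn b (alpha ^+ 2) UtU VtV defA d2_neq0).
have c_entry i : (UA^T *m b) (widen_ord Hmn i) 0 = c i.
  by rewrite /c !mxE; apply: eq_bigr => l _; rewrite !mxE.
congr (_ *m _); apply/matrixP => i j; rewrite mxE [RHS]mxE c_entry !mxE /phij.
by rewrite -/(d2 i) phi_succ_scaled ?d2_neq0 ?gt_eqF ?sA_gt0.
Qed.
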